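(* Let $\Omega$ be a semigroup and $\mathcal{O}=(\{\mathcal{O}(n)\}_{n\ge1},\circ_i,\mathds{1})$ a nonsymmetric operad. For $n\ge1$ let $\mathcal{O}^\Omega(n)$ be the $\mathbf{k}$-module of collections $f=\{f_{\alpha_1,\dots,\alpha_n}\in\mathcal{O}(n)\}_{\alpha_1,\dots,\alpha_n\in\Omega}$ labelled by $\Omega^{\times n}$, and for $f\in\mathcal{O}^\Omega(m)$, $g\in\mathcal{O}^\Omega(n)$, $1\le i\le m$ define $(f\circ_i^\Omega g)_{\alpha_1,\dots,\alpha_{m+n-1}}=f_{\alpha_1,\dots,\alpha_{i-1},\,\alpha_i\alpha_{i+1}\cdots\alpha_{i+n-1},\,\alpha_{i+n},\dots,\alpha_{m+n-1}}\circ_i g_{\alpha_i,\dots,\alpha_{i+n-1}}$. Let $\mathds{1}\in\mathcal{O}^\Omega(1)$ be the collection with $\mathds{1}_\alpha=\mathds{1}$ for all $\alpha\in\Omega$. Then $\mathcal{O}^\Omega=(\{\mathcal{O}^\Omega(n)\}_{n\ge1},\circ_i^\Omega,\mathds{1})$ is a nonsymmetric operad.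
   Context: $\mathbf{k}$ is a commutative unital ring of characteristic $0$; $\Omega$ is a semigroup (not necessarily commutative or unital) with product written by juxtaposition. A nonsymmetric operad consists of $\mathbf{k}$-modules $\mathcal{O}(n)$, $n\ge1$, bilinear partial compositions $\circ_i:\mathcal{O}(m)\otimes\mathcal{O}(n)\to\mathcal{O}(m+n-1)$ ($1\le i\le m$) and $\mathds{1}\in\mathcal{O}(1)$ with $(f\circ_i g)\circ_{i+j-1}h=f\circ_i(g\circ_j h)$ ($1\le j\le n$), $(f\circ_i g)\circ_{j+n-1}h=(f\circ_j h)\circ_i g$ ($i<j$), and $f\circ_i\mathds{1}=\mathds{1}\circ_1 f=f$. *)

From HB Require Import structures.
From mathcomp Require Import all_boot all_order all_algebra.
From mathcomp Require Import functions.
Set Implicit Arguments. Unset Strict Implicit. Unset Printing Implicit Defensive.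
Import GRing.Theory.

Definition castO (T : nat -> Type) (m n : nat) (e : m = n) (x : T m) : T n :=
  eq_rect m T x n e.

(* Nonsymmetric operad structure on k-modules O(n) (n >= 1), with partial
   compositions comp m n i = \circ_i : O(m) x O(n) -> O(m+n-1) (1 <= i <= m)
   and unit u in O(1).  comp is a total function; its values outside the
   range 1 <= i <= m, n >= 1 are irrelevant (never constrained).
   Equations between different (but provably equal) arities are stated
   through castO along any proof of the arity equality. *)
Definition is_ns_operad (R : comNzRingType) (O : nat -> lmodType R)
  (comp : forall m n : nat, nat -> O m -> O n -> O (m + n - 1)%N)
  (u : O 1%N) : Prop :=
  (forall (m n i : nat), (1 <= i <= m)%N -> (0 < n)%N ->
     (forall g : O n, linear (fun f : O m => comp m n i f g)) /\
     (forall f : O m, linear (comp m n i f)))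
  /\
  (forall (m n p i j : nat) (f : O m) (g : O n) (h : O p),
     (1 <= i <= m)%N -> (1 <= j <= n)%N -> (0 < p)%N ->
     forall e : (m + n - 1 + p - 1 = m + (n + p - 1) - 1)%N,
       @castO (fun k => O k) _ _ e (comp (m + n - 1)%N p (i + j - 1)%N (comp m n i f g) h)
       = comp m (n + p - 1)%N i f (comp n p j g h))
  /\
  (forall (m n p i j : nat) (f : O m) (g : O n) (h : O p),
     (1 <= i)%N -> (i < j)%N -> (j <= m)%N -> (0 < n)%N -> (0 < p)%N ->
     forall e : (m + n - 1 + p - 1 = m + p - 1 + n - 1)%N,
       @castO (fun k => O k) _ _ e (comp (m + n - 1)%N p (j + n - 1)%N (comp m n i f g) h)
       = comp (m + p - 1)%N n i (comp m p j f h) g)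
  /\
  (forall (m i : nat) (f : O m), (1 <= i <= m)%N ->
     forall e : (m + 1 - 1 = m)%N, @castO (fun k => O k) _ _ e (comp m 1%N i f u) = f)
  /\
  (forall (n : nat) (f : O n), (0 < n)%N ->
     forall e : (1 + n - 1 = n)%N, @castO (fun k => O k) _ _ e (comp 1%N n 1%N u f) = f).

Section Omega.
Variables (R : comNzRingType) (S : Type) (mul : S -> S -> S).

Definition OmegaO (O : nat -> lmodType R) (n : nat) : lmodType R :=
  (n.-tuple S -> O n : lmodType R).

(* Given a label sequence (a_1, ..., a_{m+n-1}), the label
   (a_1, ..., a_{i-1}, a_i a_{i+1} ... a_{i+n-1}, a_{i+n}, ..., a_{m+n-1}). *)
Definition relabel (i n : nat) (s : seq S) : seq S :=
  take i.-1 s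
  ++ (match drop i.-1 s with
      | x :: r => [:: foldl mul x (take n.-1 r)]
      | [::] => [::]
      end)
  ++ drop (i.-1 + n) s.

Definition block (i n : nat) (s : seq S) : seq S := take n (drop i.-1 s).

Definition compOmega (O : nat -> lmodType R)
  (comp : forall m n : nat, nat -> O m -> O n -> O (m + n - 1)%N)
  (m n i : nat) (f : OmegaO O m) (g : OmegaO O n) : OmegaO O (m + n - 1)%N :=
  fun a : (m + n - 1).-tuple S =>
    match (insub (relabel i n a) : option (m.-tuple S)),
          (insub (block i n a) : option (n.-tuple S)) with
    | Some b, Some c => comp m n i (f b) (g c)
    | _, _ => 0%R
    end.

Definition unitOmega (O : nat -> lmodType R) (u : O 1%N) : OmegaO O 1%N :=
  fun _ => u.

End Omega.

(* A label of a composite f o_i g is read in two ways: the block of labels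
   fed to g, and the labels fed to f, where that block is contracted to its
   product in Omega.  For an iterated composite both readings of the labels
   agree on the two sides of each operad axiom -- the only nontrivial point
   is that contracting a block containing an already contracted sub-block
   gives the same product, which is associativity of Omega -- so every axiom
   of O^Omega holds labelwise by the same axiom of O. *)

From mathcomp Require Import all_boot all_order all_algebra.
From mathcomp Require Import functions.
From mathcomp Require Import boolp zify.
Import GRing.Theory.
Set Implicit Arguments. Unset Strict Implicit.

Lemma seq_split3 (T : Type) (s : seq T) x y z : size s = x + y + z ->
  exists A C E, [/\ s = A ++ C ++ E, size A = x, size C = y & size E = z].
Proof.
move=> hs; exists (take x s), (take y (drop x s)), (drop y (drop x s)).
rewrite !cat_take_drop !size_drop !size_takel ?size_drop ?hs; try lia.
by split=> //; lia.
Qed.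

Lemma seq_split5 (T : Type) (s : seq T) x1 x2 x3 x4 x5 :
  size s = x1 + x2 + x3 + x4 + x5 ->
  exists A B C D E,
    [/\ s = A ++ (B ++ C ++ D) ++ E, size A = x1, size B = x2, size C = x3
       & size D = x4].
Proof.
move=> hs; have [A [M [E [-> hA hM _]]]] := @seq_split3 _ s x1 (x2 + x3 + x4) x5
  ltac:(lia).
have [B [C [D [-> hB hC hD]]]] := seq_split3 hM.
by exists A, B, C, D, E.
Qed.

Section Contract.
Variables (S : Type) (mul : S -> S -> S).

Definition contract (s : seq S) : seq S :=
  if s is x :: r then [:: foldl mul x r] else [::].

Lemma size_contract s : 0 < size s -> size (contract s) = 1.
Proof. by case: s. Qed.

Lemma contract1 s : size s = 1 -> contract s = s.
Proof. by case: s => [|x []]. Qed.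

Lemma relabel_cat i n (A C E : seq S) : size A = i.-1 -> size C = n -> 0 < n ->
  relabel mul i n (A ++ C ++ E) = A ++ contract C ++ E.
Proof.
move=> hA hC hn; rewrite /relabel take_size_cat // drop_size_cat //.
case: C hC hn => [<- //|x r hC _].
rewrite -hC /= take_size_cat // -[x :: r ++ E]/((x :: r) ++ E) catA.
by rewrite drop_size_cat // size_cat hA.
Qed.

Lemma block_cat i n (A C E : seq S) : size A = i.-1 -> size C = n ->
  block i n (A ++ C ++ E) = C.
Proof. by move=> hA hC; rewrite /block drop_size_cat // take_size_cat. Qed.

Hypothesis mulA : associative mul.

Lemma foldl_mulA x y t : foldl mul (mul x y) t = mul x (foldl mul y t).
Proof. by elim: t x y => //= z t IH x y; rewrite -mulA IH. Qed.

Lemma contract_contract_cat B C D : 0 < size C ->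
  contract (B ++ contract C ++ D) = contract (B ++ C ++ D).
Proof.
case: C => // c C _; rewrite /contract; case: B => [|b B] /=.
  by rewrite foldl_cat.
by rewrite !foldl_cat /= foldl_cat (foldl_mulA _ c).
Qed.

End Contract.

Section OperadAxioms.
Variables (R : comNzRingType) (O : nat -> lmodType R)
  (comp : forall m n : nat, nat -> O m -> O n -> O (m + n - 1)) (u : O 1).
Arguments comp : clear implicits.

Definition comp_bilinear := forall m n i, 1 <= i <= m -> 0 < n ->
  (forall g : O n, linear (fun f : O m => comp m n i f g)) /\
  (forall f : O m, linear (comp m n i f)).

Definition comp_seq_assoc := forall m n p i j (f : O m) (g : O n) (h : O p),
  1 <= i <= m -> 1 <= j <= n -> 0 < p ->
  forall e : m + n - 1 + p - 1 = m + (n + p - 1) - 1,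
    @castO (fun k => O k) _ _ e
      (comp (m + n - 1) p (i + j - 1) (comp m n i f g) h)
    = comp m (n + p - 1) i f (comp n p j g h).

Definition comp_par_assoc := forall m n p i j (f : O m) (g : O n) (h : O p),
  1 <= i -> i < j -> j <= m -> 0 < n -> 0 < p ->
  forall e : m + n - 1 + p - 1 = m + p - 1 + n - 1,
    @castO (fun k => O k) _ _ e
      (comp (m + n - 1) p (j + n - 1) (comp m n i f g) h)
    = comp (m + p - 1) n i (comp m p j f h) g.

Definition comp_right_unit := forall m i (f : O m), 1 <= i <= m ->
  forall e : m + 1 - 1 = m, @castO (fun k => O k) _ _ e (comp m 1 i f u) = f.

Definition comp_left_unit := forall n (f : O n), 0 < n ->
  forall e : 1 + n - 1 = n, @castO (fun k => O k) _ _ e (comp 1 n 1 u f) = f.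

Lemma is_ns_operadE : is_ns_operad comp u =
  (comp_bilinear /\ comp_seq_assoc /\ comp_par_assoc /\
   comp_right_unit /\ comp_left_unit).
Proof. by []. Qed.

End OperadAxioms.

Section OmegaOperad.
Variables (R : comNzRingType) (S : Type) (mul : S -> S -> S)
  (O : nat -> lmodType R)
  (comp : forall m n : nat, nat -> O m -> O n -> O (m + n - 1)).
Arguments comp : clear implicits.

Local Notation compO := (@compOmega R S mul O comp).

Lemma compOmega_cat m n i (f : OmegaO S O m) (g : OmegaO S O n)
    (a : (m + n - 1).-tuple S) (A C E : seq S) :
  a = A ++ C ++ E :> seq S -> size A = i.-1 -> size C = n -> 0 < n ->
  exists (b : m.-tuple S) (c : n.-tuple S),
    [/\ b = A ++ contract mul C ++ E :> seq S, c = C :> seq S &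
        compOmega mul comp i f g a = comp m n i (f b) (g c)].
Proof.
move=> ha hA hC hn.
have sb : size (A ++ contract mul C ++ E) == m.
  have := size_tuple a; rewrite ha !size_cat size_contract ?hC //; lia.
have sc : size C == n by rewrite hC.
exists (Tuple sb), (Tuple sc); split => //.
rewrite /compOmega ha relabel_cat // block_cat //.
by rewrite (valK (Tuple sb)) (valK (Tuple sc)).
Qed.
Arguments compOmega_cat {m n} i f g a A C E.

Lemma castO_OmegaO k1 k2 (e : k1 = k2) (F : OmegaO S O k1) (a : k2.-tuple S) :
  @castO (fun k => OmegaO S O k) _ _ e F a
  = @castO (fun k => O k) _ _ e (F (tcast (esym e) a)).
Proof. by case: k2 / e a. Qed.

Lemma compOmega_bilinear : comp_bilinear comp -> comp_bilinear compO.
Proof.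
move=> hlin m n i hi hn; have [linl linr] := hlin m n i hi hn.
split=> [g|f] x F G; apply: funext => a; rewrite /compOmega !fctE /=.
all: case: insub => [b|]; last by rewrite scaler0 addr0.
all: case: insub => [c|]; last by rewrite scaler0 addr0.
  exact: linl.
exact: linr.
Qed.

Hypothesis mulA : associative mul.

Lemma compOmega_seq_assoc : comp_seq_assoc comp -> comp_seq_assoc compO.
Proof.
move=> hsa m n p i j f g h hi hj hp e.
apply: funext => a; rewrite castO_OmegaO.
set a' := tcast (esym e) a.
(* B ++ C ++ D carries the labels of g o_j h, and C those of h. *)
have [A [B [C [D [E [ha hA hB hC hD]]]]]] :=
  @seq_split5 _ a' i.-1 j.-1 p (n - j) (m - i) ltac:(rewrite size_tuple; lia).
have [b [c [hb hc ->]]] :=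
  compOmega_cat (i + j - 1) (compOmega mul comp i f g) h a' (A ++ B) C (D ++ E)
  ltac:(by rewrite ha -!catA) ltac:(rewrite size_cat; lia) hC hp.
have [b1 [c1 [hb1 hc1 ->]]] :=
  compOmega_cat i f g b A (B ++ contract mul C ++ D) E ltac:(by rewrite hb -!catA)
  hA ltac:(rewrite !size_cat size_contract; lia) ltac:(lia).
have [b2 [c2 [hb2 hc2 ->]]] :=
  compOmega_cat i f (compOmega mul comp j g h) a A (B ++ C ++ D) E
  ltac:(by rewrite -ha /a' val_tcast) hA ltac:(rewrite !size_cat; lia) ltac:(lia).
have [b3 [c3 [hb3 hc3 ->]]] := compOmega_cat j g h c2 B C D hc2 hB hC hp.
have -> : b1 = b2.
  by apply: val_inj => /=; rewrite hb1 hb2 contract_contract_cat // hC.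
have -> : c1 = b3 by apply: val_inj => /=; rewrite hc1 hb3.
have -> : c = c3 by apply: val_inj => /=; rewrite hc hc3.
exact: hsa.
Qed.

Lemma compOmega_par_assoc : comp_par_assoc comp -> comp_par_assoc compO.
Proof.
move=> hpa m n p i j f g h hi1 hij hjm hn hp e.
apply: funext => a; rewrite castO_OmegaO.
set a' := tcast (esym e) a.
(* B carries the labels of g and D those of h. *)
have [A [B [C [D [E [ha hA hB hC hD]]]]]] :=
  @seq_split5 _ a' i.-1 n (j - i - 1) p (m - j) ltac:(rewrite size_tuple; lia).
have [b [c [hb hc ->]]] :=
  compOmega_cat (j + n - 1) (compOmega mul comp i f g) h a' (A ++ B ++ C) D E
  ltac:(by rewrite ha -!catA) ltac:(rewrite !size_cat; lia) hD hp.
have [b1 [c1 [hb1 hc1 ->]]] :=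
  compOmega_cat i f g b A B (C ++ contract mul D ++ E)
  ltac:(by rewrite hb -!catA) hA hB hn.
have [b2 [c2 [hb2 hc2 ->]]] :=
  compOmega_cat i (compOmega mul comp j f h) g a A B (C ++ D ++ E)
  ltac:(by move: ha; rewrite -!catA => <-; rewrite /a' val_tcast) hA hB hn.
have [b3 [c3 [hb3 hc3 ->]]] :=
  compOmega_cat j f h b2 (A ++ contract mul B ++ C) D E
  ltac:(by rewrite hb2 -!catA) ltac:(rewrite !size_cat size_contract; lia) hD hp.
have -> : b1 = b3 by apply: val_inj => /=; rewrite hb1 hb3 -!catA.
have -> : c1 = c2 by apply: val_inj => /=; rewrite hc1 hc2.
have -> : c = c3 by apply: val_inj => /=; rewrite hc hc3.
exact: hpa.
Qed.

Variable u : O 1.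

Local Notation unitO := (@unitOmega R S O u).

Lemma compOmega_right_unit :
  comp_right_unit comp u -> comp_right_unit compO unitO.
Proof.
move=> hru m i f him e; apply: funext => a; rewrite castO_OmegaO.
have [A [C [E [ha hA hC _]]]] :=
  @seq_split3 _ (tcast (esym e) a) i.-1 1 (m - i) ltac:(rewrite size_tuple; lia).
have [b [c [hb hc ->]]] := compOmega_cat i f unitO _ A C E ha hA hC erefl.
have -> : b = a by apply: val_inj => /=; rewrite hb contract1 // -ha val_tcast.
exact: hru.
Qed.

Lemma compOmega_left_unit :
  comp_left_unit comp u -> comp_left_unit compO unitO.
Proof.
move=> hlu n g hn e; apply: funext => a; rewrite castO_OmegaO.
set a' := tcast (esym e) a.
have [b [c [hb hc ->]]] := compOmega_cat 1 unitO g a' [::] a' [::]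
  ltac:(by rewrite cats0) erefl ltac:(rewrite size_tuple; lia) hn.
have -> : c = a by apply: val_inj => /=; rewrite hc /a' val_tcast.
exact: hlu.
Qed.

End OmegaOperad.

Theorem theorem5p5 (R : comNzRingType) (charR0 : [pchar R]%R =i pred0)
  (S : Type) (mul : S -> S -> S) (mulA : associative mul)
  (O : nat -> lmodType R)
  (comp : forall m n : nat, nat -> O m -> O n -> O (m + n - 1)%N)
  (u : O 1%N) :
  is_ns_operad comp u ->
  is_ns_operad (@compOmega R S mul O comp) (@unitOmega R S O u).
Proof.
rewrite !is_ns_operadE => -[hlin [hsa [hpa [hru hlu]]]].
split; first exact: compOmega_bilinear.
split; first exact: compOmega_seq_assoc.
split; first exact: compOmega_par_assoc.
split; first exact: compOmega_right_unit.
exact: compOmega_left_unit.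
Qed.
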